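(* Let $A$ be a finite skew brace such that $\Lambda(A)$ has exactly one vertex. Then $A^3=\{0\}$ (so $A$ is left nilpotent of class two), $\operatorname{Fix}(A)$ is an ideal of index $2$ in $A$, and $A^2=\operatorname{Fix}(A)$.
   Context: A skew brace is a triple $(A,+,\circ)$ where $(A,+)$ and $(A,\circ)$ are groups with $a\circ(b+c)=a\circ b-a+a\circ c$. $\lambda_a(b)=-a+a\circ b$, $a*b=\lambda_a(b)-b$; for subsets $X,Y$, $X*Y$ is the additive subgroup generated by all $x*y$; $A^1=A$, $A^{n+1}=A*A^n$. $\operatorname{Fix}(A)=\{a\in A:\lambda_x(a)=a\ \forall x\in A\}$. An ideal is a subset $I$ that is a normal subgroup of both $(A,+)$ and $(A,\circ)$ with $\lambda_a(I)\subseteq I$ for all $a$. $\Lambda(A)$ is the graph whose vertices are the $\lambda$-orbits of size $>1$, two distinct vertices $L_1,L_2$ adjacent iff $\gcd(|L_1|,|L_2|)\ne1$. *)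

From mathcomp Require Import all_boot.
Set Implicit Arguments. Unset Strict Implicit. Unset Printing Implicit Defensive.

Record skew_brace (T : finType) := SkewBrace {
  add : T -> T -> T; opp : T -> T; zero : T;
  circ : T -> T -> T; cinv : T -> T; one : T;
  addA : forall a b c, add a (add b c) = add (add a b) c;
  add0r : forall a, add zero a = a;
  addr0 : forall a, add a zero = a;
  addNr : forall a, add (opp a) a = zero;
  addrN : forall a, add a (opp a) = zero;
  circA : forall a b c, circ a (circ b c) = circ (circ a b) c;
  circ1r : forall a, circ one a = a;
  circr1 : forall a, circ a one = a;
  circVr : forall a, circ (cinv a) a = one;
  circrV : forall a, circ a (cinv a) = one;
  brace_compat : forall a b c,
    circ a (add b c) = add (add (circ a b) (opp a)) (circ a c)
}.

Section SkewBraceDefs.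
Variables (T : finType) (A : skew_brace T).

Local Notation "x + y" := (add A x y).
Local Notation "- x" := (opp A x).

Definition lam (a b : T) : T := - a + circ A a b.
Definition star (a b : T) : T := lam a b + - b.

Definition is_add_subgroup (S : {set T}) : bool :=
  [&& zero A \in S, [forall x in S, forall y in S, x + y \in S]
    & [forall x in S, - x \in S]].

Definition add_gen (X : {set T}) : {set T} :=
  [set x | [forall S : {set T}, (is_add_subgroup S && (X \subset S)) ==> (x \in S)]].

Definition starS (X Y : {set T}) : {set T} :=
  add_gen [set star x y | x in X, y in Y].

(* A^1 = A, A^(n+1) = A * A^n  (A^0 is set to A as well, unused) *)
Fixpoint Apow (n : nat) : {set T} :=
  match n with
  | 0 => setT
  | 1 => setT
  | m.+1 => starS setT (Apow m)
  end.

Definition Fix : {set T} := [set a | [forall x, lam x a == a]].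

Definition is_circ_subgroup (S : {set T}) : bool :=
  [&& one A \in S, [forall x in S, forall y in S, circ A x y \in S]
    & [forall x in S, cinv A x \in S]].

Definition is_ideal (I : {set T}) : bool :=
  [&& is_add_subgroup I,
      [forall a, forall x in I, a + x + - a \in I],
      is_circ_subgroup I,
      [forall a, forall x in I, circ A (circ A a x) (cinv A a) \in I]
    & [forall a, forall x in I, lam a x \in I]].

Definition lam_orbit (b : T) : {set T} := [set lam a b | a in [set: T]].

Definition Lambda_vertices : {set {set T}} :=
  [set L in [set lam_orbit b | b in [set: T]] | 1 < #|L|].

Definition Lambda_adj (L1 L2 : {set T}) : bool :=
  [&& L1 \in Lambda_vertices, L2 \in Lambda_vertices, L1 != L2
    & gcdn #|L1| #|L2| != 1].

End SkewBraceDefs.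

From Pilot Require Import Defs.
From mathcomp Require Import all_boot.
Set Implicit Arguments. Unset Strict Implicit. Unset Printing Implicit Defensive.

(* Every b has lambda-orbit {b} if b is in Fix(A), and an orbit of size > 1
   otherwise (lambda acts by additive automorphisms, so lambda preserves the
   complement of Fix(A)).  If Lambda(A) has one vertex, all non-fixed elements
   therefore lie in one orbit, i.e. ~Fix(A) is a single lambda-orbit.  By the
   orbit-stabiliser count |~Fix(A)| divides |A| = |Fix(A)| + |~Fix(A)|, hence
   divides |Fix(A)|, while a coset b + Fix(A) of a non-fixed b lies inside
   ~Fix(A); so |~Fix(A)| = |Fix(A)| and the additive subgroup Fix(A) has
   index 2.  The conclusions then follow from elementary facts about index-2
   subgroups: a * b = lambda_a(b) - b lies in Fix(A) (both terms are outside
   Fix(A) when b is), every g in Fix(A) is a star g = a * b0 because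
   g + b0 is non-fixed, hence in the orbit of b0, and A * Fix(A) = {0} in any
   skew brace. *)

Declare Scope brace_scope.

Section BraceAlgebra.
Variables (T : finType) (A : skew_brace T).
Local Notation "x + y" := (add A x y) : brace_scope.
Local Notation "- x" := (opp A x) : brace_scope.
Local Open Scope brace_scope.

Lemma addKl a b : - a + (a + b) = b.
Proof. by rewrite addA addNr add0r. Qed.

Lemma addrK a b : b + a + - a = b.
Proof. by rewrite -addA addrN addr0. Qed.

Lemma addI a : injective (add A a).
Proof. by move=> b c Eb; rewrite -(addKl a b) Eb addKl. Qed.

Lemma addIr a b c : b + a = c + a -> b = c.
Proof. by move=> Eb; rewrite -(addrK a b) Eb addrK. Qed.

Lemma oppK a : - - a = a.
Proof. by apply: (@addI (- a)); rewrite addrN addNr. Qed.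

Lemma opp0 : - zero A = zero A.
Proof. by rewrite -{2}(addNr A (zero A)) addr0. Qed.

Lemma oppD a b : - (a + b) = - b + - a.
Proof. by apply: (@addI (a + b)); rewrite addrN -addA (addA A b) addrN add0r addrN. Qed.

Lemma one_zero : Defs.one A = zero A.
Proof.
have := brace_compat A (Defs.one A) (zero A) (zero A).
rewrite !add0r !circ1r addr0 => E.
have N1 : - Defs.one A = zero A by apply: (@addI (zero A)); rewrite -E addr0.
by rewrite -(oppK (Defs.one A)) N1 opp0.
Qed.

Lemma circE a b : circ A a b = a + lam A a b.
Proof. by rewrite /lam addA addrN add0r. Qed.

Lemma lamD x b c : lam A x (b + c) = lam A x b + lam A x c.
Proof. by rewrite /lam brace_compat !addA. Qed.

Lemma lam0 x : lam A x (zero A) = zero A.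
Proof. by apply: (@addI (lam A x (zero A))); rewrite -lamD !addr0. Qed.

Lemma lamN x b : lam A x (- b) = - lam A x b.
Proof. by apply: (@addI (lam A x b)); rewrite -lamD !addrN lam0. Qed.

Lemma lam1 b : lam A (zero A) b = b.
Proof. by rewrite /lam -one_zero circ1r one_zero opp0 add0r. Qed.

Lemma lamM x y b : lam A (circ A x y) b = lam A x (lam A y b).
Proof. by rewrite /lam -circA (circE y b) brace_compat -(addA A (circ A x y)) !addKl. Qed.

Lemma lamV x b : lam A (cinv A x) (lam A x b) = b.
Proof. by rewrite -lamM circVr one_zero lam1. Qed.

Lemma circI x : injective (circ A x).
Proof.
by move=> b c E; rewrite -(circ1r A b) -(circVr A x) -circA E circA circVr circ1r.
Qed.

Lemma lam_cinv a : lam A a (cinv A a) = - a.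
Proof. by apply: (@addI a); rewrite addrN -circE circrV one_zero. Qed.

End BraceAlgebra.

Section AdditiveSubgroups.
Variables (T : finType) (A : skew_brace T).
Local Notation "x + y" := (add A x y) : brace_scope.
Local Notation "- x" := (opp A x) : brace_scope.
Local Open Scope brace_scope.

Section Subgroup.
Variables (S : {set T}) (S_sub : is_add_subgroup A S).

Lemma subgroup0 : zero A \in S.
Proof. by case/and3P: S_sub. Qed.

Lemma subgroupD a b : a \in S -> b \in S -> a + b \in S.
Proof. by case/and3P: S_sub => _ /forall_inP/(_ a) HD _ /HD /forall_inP; apply. Qed.

Lemma subgroupN a : a \in S -> - a \in S.
Proof. by case/and3P: S_sub => _ _ /forall_inP; apply. Qed.

Lemma subgroup_opp a : (- a \in S) = (a \in S).
Proof. by apply/idP/idP => /subgroupN //; rewrite oppK. Qed.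

Lemma subgroup_addr x a : x \in S -> (a + x \in S) = (a \in S).
Proof.
move=> Sx; apply/idP/idP => [Sax|Sa]; last exact: subgroupD.
by rewrite -(addrK A x a); apply/subgroupD/subgroupN.
Qed.

Lemma subgroup_addl x a : x \in S -> (x + a \in S) = (a \in S).
Proof.
move=> Sx; apply/idP/idP => [Sxa|Sa]; last exact: subgroupD.
by rewrite -(addKl A x a); apply/subgroupD/Sxa/subgroupN.
Qed.

Lemma card_coset a : #|[set a + x | x in S]| = #|S|.
Proof. by rewrite card_imset //; apply: addI. Qed.

Lemma coset_compl a : a \notin S -> [set a + x | x in S] \subset ~: S.
Proof.
by move=> Sa; apply/subsetP => _ /imsetP [x Sx ->]; rewrite in_setC subgroup_addr.
Qed.

Section IndexTwo.
Hypothesis index2 : #|~: S| = #|S|.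

Lemma index2_coset a : a \notin S -> [set a + x | x in S] = ~: S.
Proof.
by move=> Sa; apply/eqP; rewrite eqEcard coset_compl // card_coset index2 leqnn.
Qed.

Lemma index2_subl a b : a \notin S -> b \notin S -> - a + b \in S.
Proof.
move=> Sa Sb; have : b \in ~: S by rewrite in_setC.
by rewrite -(index2_coset Sa) => /imsetP [x Sx ->]; rewrite addKl.
Qed.

Lemma index2_subr a b : a \notin S -> b \notin S -> b + - a \in S.
Proof.
move=> Sa Sb; rewrite -(oppK A (b + - a)) oppD oppK; apply: subgroupN.
by rewrite -{1}(oppK A a); apply: index2_subl; rewrite subgroup_opp.
Qed.

Lemma index2_normal a x : x \in S -> a + x + - a \in S.
Proof.
move=> Sx; have [Sa|Sa] := boolP (a \in S).
  by apply: subgroupD; [apply: subgroupD | apply: subgroupN].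
by apply: index2_subr; rewrite ?subgroup_addr.
Qed.

End IndexTwo.
End Subgroup.

Lemma subgroup_zero : is_add_subgroup A [set zero A].
Proof.
apply/and3P; split; first by rewrite set11.
  by apply/forall_inP => _ /set1P ->; apply/forall_inP => _ /set1P ->; rewrite add0r set11.
by apply/forall_inP => _ /set1P ->; rewrite opp0 set11.
Qed.

Lemma add_gen_subgroup (S : {set T}) : is_add_subgroup A S -> add_gen A S = S.
Proof.
move=> S_sub; apply/setP => x; rewrite inE; apply/forallP/idP => [/(_ S)|Sx S'].
  by rewrite S_sub subxx => /implyP; apply.
by apply/implyP => /andP [_ /subsetP]; apply.
Qed.

End AdditiveSubgroups.

Section FixedPointsAndOrbits.
Variables (T : finType) (A : skew_brace T).
Local Notation "x + y" := (add A x y) : brace_scope.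
Local Notation "- x" := (opp A x) : brace_scope.
Local Open Scope brace_scope.
Local Notation F := (Fix A).

Lemma FixP a : reflect (forall x, lam A x a = a) (a \in F).
Proof. by rewrite inE; apply: (iffP forallP) => H x; apply/eqP. Qed.

(* Fix(A) is an additive subgroup, as the common fixed points of the
   additive automorphisms lambda_x. *)
Lemma Fix_subgroup : is_add_subgroup A F.
Proof.
apply/and3P; split; first by apply/FixP => x; rewrite lam0.
  apply/forall_inP => a /FixP Fa; apply/forall_inP => b /FixP Fb.
  by apply/FixP => x; rewrite lamD Fa Fb.
by apply/forall_inP => a /FixP Fa; apply/FixP => x; rewrite lamN Fa.
Qed.

Lemma lam_notFix x b : b \notin F -> lam A x b \notin F.
Proof.
move=> Fb; apply: contra Fb => /FixP Fxb; apply/FixP => y.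
by rewrite -(lamV A x b) Fxb.
Qed.

Lemma cinv_Fix x : x \in F -> cinv A x = - x.
Proof.
move=> /FixP Fx; apply: (@addIr _ A x); rewrite addNr.
by have := circVr A x; rewrite circE Fx one_zero.
Qed.

Lemma starS_Fix : starS A setT F = [set zero A].
Proof.
have stars0 : [set star A x b | x in setT, b in F] = [set zero A].
  apply/eqP; rewrite eqEsubset; apply/andP; split.
    by apply/subsetP => _ /imset2P [x b _ /FixP Fb ->]; rewrite /star Fb addrN set11.
  apply/subsetP => _ /set1P ->; apply/imset2P; exists (zero A) (zero A) => //.
    exact: (subgroup0 Fix_subgroup).
  by rewrite /star lam0 addrN.
by rewrite /starS stars0 add_gen_subgroup // subgroup_zero.
Qed.

Lemma orbit_mem x b : lam A x b \in lam_orbit A b.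
Proof. by apply/imsetP; exists x; rewrite ?inE. Qed.

Lemma orbit_self b : b \in lam_orbit A b.
Proof. by rewrite -{1}(lam1 A b) orbit_mem. Qed.

Lemma orbit_Fix b : b \in F -> lam_orbit A b = [set b].
Proof.
move/FixP => Fb; apply/setP => w; rewrite inE.
by apply/imsetP/eqP => [[x _ ->]|->] //; exists (zero A); rewrite ?inE ?lam1.
Qed.

Lemma orbit_notFix b : b \notin F -> 1 < #|lam_orbit A b|.
Proof.
rewrite inE negb_forall => /existsP [x bx]; apply/card_gt1P.
by exists (lam A x b), b; rewrite orbit_mem orbit_self.
Qed.

Lemma orbit_vertex b : b \notin F -> lam_orbit A b \in Lambda_vertices A.
Proof. by move=> Fb; rewrite inE orbit_notFix // andbT imset_f. Qed.

(* Orbit-stabiliser: every lambda-orbit size divides |A|, since the fibres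
   of x -> lambda_x(b) are left circle-cosets of the stabiliser of b. *)
Lemma orbit_dvd b : #|lam_orbit A b| %| #|T|.
Proof.
set O := lam_orbit A b; set Stab := [set x | lam A x b == b].
have fibre_card c : c \in O -> #|[set x | lam A x b == c]| = #|Stab|.
  case/imsetP => y _ ->.
  have -> : [set x | lam A x b == lam A y b] = [set circ A y x | x in Stab].
    apply/setP => w; rewrite inE; apply/eqP/imsetP => [Ew|[x /[!inE] /eqP xb ->]].
      exists (circ A (cinv A y) w); first by rewrite inE lamM Ew lamV.
      by rewrite circA circrV circ1r.
    by rewrite lamM xb.
  by rewrite card_imset //; apply: circI.
have -> : #|T| = \sum_(x : T) 1 by rewrite sum1_card.
rewrite (partition_big (fun x => lam A x b) (mem O)) /=; last first.
  by move=> x _; apply: orbit_mem.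
rewrite (eq_bigr (fun _ => #|Stab|)) ?sum_nat_const ?dvdn_mulr //.
by move=> c Oc; rewrite -(fibre_card c Oc) -sum1_card; apply: eq_bigl => x; rewrite inE.
Qed.

End FixedPointsAndOrbits.

Section OneVertex.
Variables (T : finType) (A : skew_brace T).
Local Notation "x + y" := (add A x y) : brace_scope.
Local Notation "- x" := (opp A x) : brace_scope.
Local Open Scope brace_scope.
Local Notation F := (Fix A).
Local Notation FixS := (Fix_subgroup A).
Hypothesis one_vertex : #|Lambda_vertices A| = 1.

Lemma orbit_nonfixed b : b \notin F -> lam_orbit A b = ~: F.
Proof.
have /cards1P [L EL] : #|Lambda_vertices A| == 1 by rewrite one_vertex.
have orbitL c : c \notin F -> lam_orbit A c = L.
  by move=> Fc; apply/set1P; rewrite -EL orbit_vertex.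
move=> Fb; apply/setP => c; rewrite in_setC; apply/idP/idP.
  by case/imsetP => x _ ->; apply: lam_notFix.
by move=> Fc; rewrite orbitL // -(orbitL c Fc) orbit_self.
Qed.

Lemma exists_nonfixed : exists b, b \notin F.
Proof.
have /cards1P [L EL] : #|Lambda_vertices A| == 1 by rewrite one_vertex.
have : L \in Lambda_vertices A by rewrite EL set11.
rewrite inE => /andP [/imsetP [b _ ->] orbit_gt1]; exists b.
by apply: contraTN orbit_gt1 => /orbit_Fix ->; rewrite cards1.
Qed.

(* Fix(A) has index 2: |~Fix(A)| divides |Fix(A)| by orbit-stabiliser, and
   a coset b + Fix(A) with b non-fixed embeds Fix(A) into ~Fix(A). *)
Lemma Fix_index2 : #|~: F| = #|F|.
Proof.
have [b Fb] := exists_nonfixed.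
apply/eqP; rewrite eqn_leq; apply/andP; split.
  apply: dvdn_leq; first by apply/card_gt0P; exists (zero A); exact: (subgroup0 FixS).
  by rewrite -(dvdn_addl _ (dvdnn #|~: F|)) cardsC -(orbit_nonfixed Fb) orbit_dvd.
by rewrite -(card_coset A F b) subset_leq_card // coset_compl //; exact: FixS.
Qed.

Lemma card_Fix2 : #|T| = (2 * #|F|)%N.
Proof. by rewrite -(cardsC F) Fix_index2 addnn mul2n. Qed.

Lemma star_Fix x b : star A x b \in F.
Proof.
rewrite /star; have [/FixP ->|Fb] := boolP (b \in F).
  by rewrite addrN (subgroup0 FixS).
by apply: (index2_subr FixS Fix_index2) => //; apply: lam_notFix.
Qed.

Lemma lam_sub_Fix x b : - b + lam A x b \in F.
Proof.
have [/FixP ->|Fb] := boolP (b \in F); first by rewrite addNr (subgroup0 FixS).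
by apply: (index2_subl FixS Fix_index2) => //; apply: lam_notFix.
Qed.

(* Conjugating x in Fix(A) by a in the circle group: with
   lambda_x(a') = a' + f (a' the circle inverse of a, f in Fix(A)) one gets
   (a o x) o a' = (a + x - a) + f. *)
Lemma Fix_circ_normal a x : x \in F -> circ A (circ A a x) (cinv A a) \in F.
Proof.
move=> Fx; have [f Ff Ex] : exists2 f, f \in F & lam A x (cinv A a) = cinv A a + f.
  by exists (- cinv A a + lam A x (cinv A a)); rewrite ?lam_sub_Fix // addA addrN add0r.
rewrite -circA circE (circE A x) Ex !lamD lam_cinv.
have /FixP -> := Fx; have /FixP -> := Ff; rewrite !addA.
by apply: (subgroupD FixS) => //; apply: (index2_normal FixS Fix_index2).
Qed.

Lemma Fix_ideal : is_ideal A F.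
Proof.
apply/and5P; split.
- exact: FixS.
- apply/forallP => a; apply/forall_inP => x Fx.
  exact: (index2_normal FixS Fix_index2).
- apply/and3P; split; first by rewrite one_zero (subgroup0 FixS).
    apply/forall_inP => x Fx; apply/forall_inP => y Fy.
    by rewrite circE; have /FixP -> := Fy; apply: (subgroupD FixS).
  by apply/forall_inP => x Fx; rewrite cinv_Fix // (subgroupN FixS).
- by apply/forallP => a; apply/forall_inP; apply: Fix_circ_normal.
- by apply/forallP => a; apply/forall_inP => x Fx; have /FixP -> := Fx.
Qed.

(* A * A = Fix(A): every g in Fix(A) is g = lambda_x(b) - b, because
   g + b is non-fixed, hence in the orbit of a non-fixed b. *)
Lemma starS_setT : starS A setT setT = F.
Proof.
have starsF : [set star A x b | x in setT, b in setT] = F.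
  apply/eqP; rewrite eqEsubset; apply/andP; split.
    by apply/subsetP => _ /imset2P [x b _ _ ->]; apply: star_Fix.
  have [b Fb] := exists_nonfixed.
  apply/subsetP => g Fg; have : g + b \in lam_orbit A b.
    by rewrite orbit_nonfixed // in_setC (subgroup_addl FixS _ Fg).
  case/imsetP => x _ Egb; apply/imset2P; exists x b; rewrite ?inE //.
  by rewrite /star -Egb addrK.
by rewrite /starS starsF add_gen_subgroup //; exact: FixS.
Qed.

End OneVertex.

Theorem mainTheorem12 (T : finType) (A : skew_brace T) :
  #|Lambda_vertices A| = 1 ->
  [/\ Apow A 3 = [set zero A],
      is_ideal A (Fix A),
      #|T| = (2 * #|Fix A|)%N
    & Apow A 2 = Fix A].
Proof.
move=> one_vertex; have A2 : Apow A 2 = Fix A := starS_setT one_vertex.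
split; [| exact: Fix_ideal | exact: card_Fix2 | exact: A2].
by rewrite (_ : Apow A 3 = starS A setT (Apow A 2)) // A2 starS_Fix.
Qed.
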